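(* Let $\mathfrak l$ be a real finite-dimensional nilpotent Lie algebra with $\dim\mathfrak l'=2$ and $\mathfrak l'\subset\mathfrak z(\mathfrak l)$. Then there exists a 3-dimensional subspace $\bar{\mathfrak l}\subset\mathfrak l$ with $[\bar{\mathfrak l},\bar{\mathfrak l}]=\mathfrak l'$. Moreover, one can choose a basis $X_1,X_2,X_3$ of $\bar{\mathfrak l}$ and a basis $Y,Z$ of $\mathfrak l'$ such that $[X_1,X_2]=Y$, $[X_1,X_3]=Z$, $[X_2,X_3]=0$.
   Context: $\mathfrak l'=[\mathfrak l,\mathfrak l]$, $\mathfrak z(\mathfrak l)$ the centre. *)

From HB Require Import structures.
From mathcomp Require Import all_boot all_order all_algebra.
From mathcomp Require Import reals.
Set Implicit Arguments. Unset Strict Implicit. Unset Printing Implicit Defensive.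
Import Order.TTheory GRing.Theory Num.Theory.
Local Open Scope ring_scope.

Definition is_lie_bracket (R : realType) (V : vectType R) (br : V -> V -> V) : Prop :=
  [/\ (forall (a : R) (x y z : V), br (a *: x + y) z = a *: br x z + br y z),
      (forall (a : R) (x y z : V), br z (a *: x + y) = a *: br z x + br z y),
      (forall x : V, br x x = 0) &
      (forall x y z : V, br x (br y z) + br y (br z x) + br z (br x y) = 0)].

(* [U, W] : the subspace spanned by all brackets [u, w], u in U, w in W.
   By bilinearity it is spanned by the brackets of basis vectors. *)
Definition lie_br (R : realType) (V : vectType R) (br : V -> V -> V)
    (U W : {vspace V}) : {vspace V} :=
  <<[seq br u w | u <- vbasis U, w <- vbasis W]>>%VS.

Fixpoint lcs (R : realType) (V : vectType R) (br : V -> V -> V) (k : nat)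
    : {vspace V} :=
  if k is k'.+1 then lie_br br fullv (lcs br k') else fullv.

Definition lie_nilpotent (R : realType) (V : vectType R) (br : V -> V -> V) : Prop :=
  exists n : nat, lcs br n = 0%VS.

Definition derived (R : realType) (V : vectType R) (br : V -> V -> V) : {vspace V} :=
  lie_br br fullv fullv.

Definition in_center (R : realType) (V : vectType R) (br : V -> V -> V) (z : V) : Prop :=
  forall x : V, br x z = 0.

(* The derived algebra is spanned by brackets, so dim l' = 2 provides two
   independent brackets [a,b], [c,d].  Some single ad x then has rank at least
   2: otherwise [a,d] lies on both lines spanned by [a,b] and [c,d], hence
   vanishes, likewise [c,b], and ad (a+c) maps b, d to [a,b], [c,d].  With
   Y = [x,p] and Z = [x,q] independent, Y and Z span l', so [p,q] = aY + bZ,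
   and replacing p, q by p - bx, q + ax kills this bracket without changing Y
   and Z.  Finally x, p, q are independent because ad x kills x and is
   injective on their span. *)

From HB Require Import structures.
From mathcomp Require Import all_boot all_order all_algebra.
From mathcomp Require Import reals.
Set Implicit Arguments.
Unset Strict Implicit.
Unset Printing Implicit Defensive.

Import Order.TTheory GRing.Theory Num.Theory.
Local Open Scope ring_scope.

Section TwoVectors.
Variables (K : fieldType) (V : vectType K).
Implicit Types u v w : V.

Lemma vlineN v : (<[- v]> = <[v]>)%VS.
Proof.
apply/eqP; rewrite eqEsubv -!memvE rpredN memv_line /=.
by rewrite -{1}[v]opprK rpredN memv_line.
Qed.

Lemma free2C u v : free [:: u; v] = free [:: v; u].
Proof.
by apply: perm_free; rewrite -[[:: v; u]]/(rot 1 [:: u; v]) perm_sym perm_rot.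
Qed.

Lemma free2E u v : free [:: u; v] = (u != 0) && (v \notin <[u]>%VS).
Proof. by rewrite free2C free_cons span_seq1 seq1_free andbC. Qed.

Lemma notfree2_line u v : ~~ free [:: u; v] -> u != 0 -> v \in <[u]>%VS.
Proof. by rewrite free2E negb_and !negbK => /orP[/eqP->|//]; rewrite eqxx. Qed.

Lemma free2_line_cap u v w :
  free [:: u; v] -> w \in <[u]>%VS -> w \in <[v]>%VS -> w = 0.
Proof.
rewrite free2C free2E => /andP[_ uNv] /vlineP[k ->] kuv.
have [->|k0] := eqVneq k 0; first by rewrite scale0r.
by move: uNv; rewrite -(scalerK k0 u) memvZ.
Qed.

Lemma mem_span2P u v w :
  reflect (exists a b, w = a *: u + b *: v) (w \in <<[:: u; v]>>%VS).
Proof.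
rewrite span_cons span_seq1; apply: (iffP memv_addP) => [|[a [b ->]]].
  by case=> _ /vlineP[a ->] [_ /vlineP[b ->] ->]; exists a, b.
by exists (a *: u); rewrite ?memvZ ?memv_line //;
  exists (b *: v); rewrite ?memvZ ?memv_line.
Qed.

Lemma free_cons_lker (W : vectType K) (f : 'Hom(V, W)) u s :
  u != 0 -> f u = 0 -> free (map f s) -> free (u :: s).
Proof.
move=> u0 fu0 /eqnP; rewrite size_map -limg_span => dim_img.
have rank_s := limg_ker_dim f <<s>>; rewrite dim_img in rank_s.
have cap0 : (<<s>> :&: lker f = 0)%VS.
  apply/eqP; rewrite -dimv_eq0 -leqn0 -(leq_add2r (size s)) rank_s add0n.
  exact: dim_span.
rewrite free_cons /free -rank_s cap0 dimv0 add0n eqxx andbT.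
apply: contraNN u0 => u_s.
by rewrite -memv0 -cap0 memv_cap u_s memv_ker fu0 eqxx.
Qed.

End TwoVectors.

Section LieAlgebra.
Variables (R : realType) (V : vectType R) (br : V -> V -> V).
Hypothesis lie_br_axioms : is_lie_bracket br.

Lemma br_linear x : linear (br x).
Proof. by case: lie_br_axioms => _ linr _ _ a u v; rewrite linr. Qed.

HB.instance Definition _ x :=
  GRing.isLinear.Build R V V *:%R (br x) (br_linear x).

Lemma brxx x : br x x = 0.
Proof. by case: lie_br_axioms. Qed.

Lemma brDl u v w : br (u + v) w = br u w + br v w.
Proof.
by case: lie_br_axioms => linl _ _ _; rewrite -{1}[u]scale1r linl scale1r.
Qed.

Lemma br_antisym x y : br x y = - br y x.
Proof.
apply/eqP; rewrite -subr_eq0 opprK.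
by have := brxx (x + y); rewrite brDl !linearD /= !brxx add0r addr0 addrC => ->.
Qed.

Lemma brZl k u w : br (k *: u) w = k *: br u w.
Proof. by rewrite br_antisym linearZ /= br_antisym scalerN opprK. Qed.

Lemma br0l u : br 0 u = 0.
Proof. by rewrite br_antisym linear0 oppr0. Qed.

Lemma br_shift x p a : br x (p + a *: x) = br x p.
Proof. by rewrite linearD linearZ /= brxx scaler0 addr0. Qed.

Lemma mem_lie_br (U W : {vspace V}) u w :
  u \in U -> w \in W -> br u w \in lie_br br U W.
Proof.
move=> uU wW; rewrite (coord_vbasis uU) (coord_vbasis wW).
rewrite linear_sum rpred_sum // => j _; rewrite linearZ rpredZ //=.
rewrite br_antisym linear_sum rpredN rpred_sum // => i _.
rewrite linearZ rpredZ //=.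
by rewrite br_antisym rpredN memv_span // allpairs_f // mem_nth // size_tuple.
Qed.

Lemma lie_br_sub_derived (U W : {vspace V}) : (lie_br br U W <= derived br)%VS.
Proof.
apply/span_subvP => _ /allpairsP[[u w] [_ _ ->]] /=.
by apply: mem_lie_br; rewrite memvf.
Qed.

Lemma exists_free_brackets :
  (1 < \dim (derived br))%N -> exists a b c d, free [:: br a b; br c d].
Proof.
move=> dim_gt1; set L := [seq br u w | u <- vbasis fullv, w <- vbasis fullv].
have /allPn[Y YL Y0] : ~~ all (fun v => v == 0) L.
  apply/negP => /allP L0; move: dim_gt1.
  suff -> : derived br = 0%VS by rewrite dimv0.
  by apply/eqP; rewrite -subv0; apply/span_subvP => v /L0/eqP->; apply: mem0v.
have /allPn[Z ZL ZY] : ~~ all (fun v => v \in <[Y]>%VS) L.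
  apply/negP => /allP LY.
  have /dimvS : (derived br <= <[Y]>)%VS by apply/span_subvP.
  by rewrite dim_vline Y0 leqNgt dim_gt1.
case/allpairsP: YL => [[a b] [_ _ /= eY]].
case/allpairsP: ZL => [[c d] [_ _ /= eZ]].
by exists a, b, c, d; rewrite free2E -eY -eZ Y0.
Qed.

Lemma cross_bracket_eq0 a b c d :
  free [:: br a b; br c d] -> ~~ free [:: br a b; br a d] ->
  ~~ free [:: br d c; br d a] -> br a d = 0.
Proof.
move=> fr nf_a nf_d; have := fr; rewrite free2E => /andP[ab0 _].
have dc0 : br d c != 0.
  by rewrite br_antisym oppr_eq0; apply: free_not0 fr _; rewrite !inE eqxx orbT.
apply: (free2_line_cap fr); first exact: notfree2_line nf_a ab0.
have := notfree2_line nf_d dc0.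
by rewrite (br_antisym d a) (br_antisym d c) vlineN rpredN.
Qed.

Lemma exists_free_ad_pair a b c d :
  free [:: br a b; br c d] -> exists x p q, free [:: br x p; br x q].
Proof.
move=> fr.
have [fr_a|nf_a] := boolP (free [:: br a b; br a d]); first by exists a, b, d.
have [fr_d|nf_d] := boolP (free [:: br d c; br d a]); first by exists d, c, a.
have [fr_c|nf_c] := boolP (free [:: br c d; br c b]); first by exists c, d, b.
have [fr_b|nf_b] := boolP (free [:: br b a; br b c]); first by exists b, a, c.
have ad0 := cross_bracket_eq0 fr nf_a nf_d.
have cb0 := cross_bracket_eq0 (etrans (free2C _ _) fr) nf_c nf_b.
by exists (a + c), b, d; rewrite !brDl ad0 cb0 addr0 add0r.
Qed.

Lemma free_ad_triple x y z : free [:: br x y; br x z] -> free [:: x; y; z].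
Proof.
move=> fr; apply: (free_cons_lker (f := linfun (br x))); rewrite ?lfunE /=.
- by apply: contraTneq fr => ->; rewrite free2E br0l eqxx.
- exact: brxx.
- by rewrite !lfunE.
Qed.

Lemma commuting_ad_lifts x p q :
  br p q \in <<[:: br x p; br x q]>>%VS ->
  exists X2 X3, [/\ br x X2 = br x p, br x X3 = br x q & br X2 X3 = 0].
Proof.
case/mem_span2P => a [b epq]; exists (p + (- b) *: x), (q + a *: x).
rewrite !br_shift brDl brZl br_shift linearD linearZ /= epq (br_antisym p x).
by split=> //; rewrite scalerN scaleNr addrAC addrK subrr.
Qed.

End LieAlgebra.

Theorem lemma1 (R : realType) (V : vectType R) (br : V -> V -> V)
  (hlie : is_lie_bracket br) (hnil : lie_nilpotent br)
  (hdim : \dim (derived br) = 2%N)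
  (hcent : forall y : V, y \in derived br -> in_center br y) :
  exists (X1 X2 X3 Y Z : V),
    [/\ free [:: X1; X2; X3],
        free [:: Y; Z],
        derived br = <<[:: Y; Z]>>%VS,
        lie_br br <<[:: X1; X2; X3]>>%VS <<[:: X1; X2; X3]>>%VS = derived br &
        [/\ br X1 X2 = Y, br X1 X3 = Z & br X2 X3 = 0]].
Proof.
have [x [p [q frYZ]]] : exists x p q, free [:: br x p; br x q].
  have [|a [b [c [d fr]]]] := exists_free_brackets (br := br).
    by rewrite hdim.
  exact: (exists_free_ad_pair hlie fr).
set Y := br x p; set Z := br x q.
have derivedE : derived br = <<[:: Y; Z]>>%VS.
  apply/esym/eqP; rewrite eqEdim (eqnP frYZ) hdim leqnn andbT.
  apply/span_subvP => v; rewrite !inE => /orP[]/eqP->;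
    by apply: mem_lie_br; rewrite ?memvf.
have [X2 [X3 [eY eZ e23]]] : exists X2 X3,
    [/\ br x X2 = Y, br x X3 = Z & br X2 X3 = 0].
  by apply: commuting_ad_lifts; rewrite // -derivedE mem_lie_br ?memvf.
exists x, X2, X3, Y, Z; split=> //.
- by apply: (free_ad_triple hlie); rewrite eY eZ.
- apply/eqP; rewrite eqEsubv lie_br_sub_derived // derivedE.
  apply/span_subvP => v; rewrite !inE => /orP[]/eqP->;
    [rewrite -eY | rewrite -eZ];
    by apply: mem_lie_br; rewrite // memv_span // !inE eqxx ?orbT.
Qed.
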